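(* Let $(Q,\cdot)$ be a finite Ward quasigroup of order $n$ with $xx=e$ for all $x$. If $(Q,\cdot)$ is $k$-translatable (with respect to some ordering of $Q$ as $1,\ldots,n$), where $1\le k<n$, then $k=1$, and $(Q,\cdot)$ is induced by a cyclic group, i.e. the group $(Q,\circ)$ with $x\circ y=x\cdot(e\cdot y)$ is cyclic.
   Context: A Ward quasigroup is a quasigroup (a magma in which $ax=b$, $ya=b$ have unique solutions) satisfying $(xz)(yz)=xy$ for all $x,y,z$; it has an element $e$ with $xx=e$ for all $x$, and $x\circ y=x(ey)$ defines a group with identity $e$ from which $(Q,\cdot)$ is recovered by $xy=x\circ y^{-1}$. With $Q=\{1,\ldots,n\}$ and $[i]_n$ denoting $i$ modulo $n$ (with $0$ identified with $n$), a magma is $k$-translatable ($1\le k<n$) if $i\cdot j=[i+1]_n\cdot[j+k]_n$ for all $i,j\in Q$. *)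

(* Q = {1,...,n} is modelled by 'I_n = {0,...,n-1}
   (element i+1 of the paper corresponds to ordinal i); [i]_n becomes i %% n. *)
From mathcomp Require Import all_boot.
Set Implicit Arguments. Unset Strict Implicit. Unset Printing Implicit Defensive.

Definition quasigroup (T : Type) (op : T -> T -> T) : Prop :=
  forall a b : T, (exists! x, op a x = b) /\ (exists! y, op y a = b).

Definition ward_quasigroup (T : Type) (op : T -> T -> T) : Prop :=
  quasigroup op /\ forall x y z, op (op x z) (op y z) = op x y.

Definition add_mod n (k : nat) (i : 'I_n) : 'I_n :=
  Ordinal (ltn_pmod (i + k) (leq_ltn_trans (leq0n i) (ltn_ord i))).

Definition k_translatable n (op : 'I_n -> 'I_n -> 'I_n) (k : nat) : Prop :=
  forall i j : 'I_n, op i j = op (add_mod 1 i) (add_mod k j).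

Definition ward_circ (T : Type) (op : T -> T -> T) (e : T) (x y : T) : T :=
  op x (op e y).

Definition cyclic_group_op (T : Type) (circ : T -> T -> T) (e : T) : Prop :=
  exists g : T, forall x : T, exists m : nat, x = iter m (fun y => circ y g) e.

From mathcomp Require Import all_boot.
Set Implicit Arguments. Unset Strict Implicit.

(* Translatability and xx = e give (e+1)(e+1) = e = ee = (e+1)(e+k), so left
   cancellation forces k = 1.  A Ward quasigroup has e as right identity, and
   1-translatability then gives x o (e+1) = x (e(e+1)) = x (e-1) = (x+1) e
   = x+1: right multiplication by e+1 is the cyclic shift, whose orbit through
   e is all of Q. *)

Lemma quasigroup_lcancel (T : Type) (op : T -> T -> T) a x y :
  quasigroup op -> op a x = op a y -> x = y.
Proof.
move=> /(_ a (op a x)) [[x0 [_ uniq_x0]] _] eq_axy.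
by rewrite -(uniq_x0 x erefl) -(uniq_x0 y (esym eq_axy)).
Qed.

Lemma ward_mulr_idem (T : Type) (op : T -> T -> T) (e : T) :
  ward_quasigroup op -> (forall x, op x x = e) -> forall x, op x e = x.
Proof.
move=> [qg ward] sqr x.
have [[z [xz_x _]] _] := qg x x.
by rewrite -(sqr z) -{1}xz_x ward.
Qed.

Lemma cyclic_group_op_orbit (T : Type) (circ : T -> T -> T) (e g : T)
    (f : T -> T) :
  (forall y, circ y g = f y) -> (forall x, exists m, x = iter m f e) ->
  cyclic_group_op circ e.
Proof.
move=> circ_g orbit; exists g => x.
have [m ->] := orbit x; exists m.
by elim: m => //= m ->; rewrite circ_g.
Qed.

Section AddMod.

Variable n : nat.
Implicit Types (i x : 'I_n) (op : 'I_n -> 'I_n -> 'I_n).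

Lemma add_mod_eq_mod k l i : add_mod k i = add_mod l i -> k = l %[mod n].
Proof. by move=> /(congr1 val) /eqP; rewrite /= eqn_modDl => /eqP. Qed.

Lemma add_mod1_pred i : add_mod 1 (add_mod n.-1 i) = i.
Proof.
have n_gt0 : 0 < n by apply: leq_ltn_trans (ltn_ord i).
apply: val_inj => /=.
by rewrite modnDml -addnA addn1 prednK // modnDr modn_small.
Qed.

Lemma iter_add_mod1 m i : val (iter m (add_mod 1) i) = (i + m) %% n.
Proof.
elim: m => [|m IHm] /=; first by rewrite addn0 modn_small.
by rewrite IHm modnDml -addnA addn1.
Qed.

Lemma iter_add_mod1_onto i x : exists m, x = iter m (add_mod 1) i.
Proof.
exists (x + n - i); apply: val_inj; rewrite iter_add_mod1.
have le_ixn : i <= x + n by rewrite ltnW // ltn_addl.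
by rewrite addnBA // addnC addnK modnDr modn_small.
Qed.

Lemma translatable_k_eq1 op e k :
  quasigroup op -> (forall x, op x x = e) -> 1 <= k < n ->
  k_translatable op k -> k = 1.
Proof.
move=> qg sqr /andP[k_gt0 lt_kn] transl.
have e1k_e11 : add_mod k e = add_mod 1 e.
  by apply: (@quasigroup_lcancel _ op (add_mod 1 e) _ _ qg); rewrite -transl !sqr.
have /eqP := add_mod_eq_mod e1k_e11.
have lt_1n : 1 < n := leq_ltn_trans k_gt0 lt_kn.
by rewrite !modn_small // => /eqP.
Qed.

Lemma ward_circ_add_mod1 op e :
  k_translatable op 1 -> (forall x, op x e = x) ->
  forall x, ward_circ op e x (add_mod 1 e) = add_mod 1 x.
Proof.
move=> transl mulr_e x; set p := add_mod n.-1 e.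
have e_succ_e : op e (add_mod 1 e) = p.
  by rewrite -{1}(add_mod1_pred e) -transl mulr_e.
by rewrite /ward_circ e_succ_e transl add_mod1_pred mulr_e.
Qed.

End AddMod.

Theorem theorem4p16 (n : nat) (op : 'I_n -> 'I_n -> 'I_n) (e : 'I_n) (k : nat) :
  ward_quasigroup op ->
  (forall x : 'I_n, op x x = e) ->
  1 <= k < n ->
  k_translatable op k ->
  k = 1 /\ cyclic_group_op (ward_circ op e) e.
Proof.
move=> ward sqr k_range transl.
have k_eq1 := translatable_k_eq1 ward.1 sqr k_range transl.
split=> //; subst k.
apply: (cyclic_group_op_orbit (g := add_mod 1 e) (f := add_mod 1)).
  exact: ward_circ_add_mod1 transl (ward_mulr_idem ward sqr).
exact: iter_add_mod1_onto.
Qed.
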